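(* Let $G$ be a simple stochastic game and $A$ a subset of the arcs of $G$. A positional MAX strategy $\sigma$ is optimal in $G$ if and only if it is optimal in $G[A,\sigma]$.
   Context: A simple stochastic game (SSG) $G$ is a finite directed graph whose vertex set is partitioned into MAX vertices, MIN vertices, random vertices and a nonempty set of sinks; every non-sink vertex has at least one outgoing arc, every sink has exactly one outgoing arc, a self-loop; each random vertex $x$ carries a rational probability distribution $p_x$ on its out-neighbourhood, positive on every out-neighbour; each sink $s$ has rational value $\mathrm{Val}(s)\in[0,1]$. A positional MAX (resp. MIN) strategy assigns to each MAX (resp. MIN) vertex one of its out-neighbours. Under $\sigma,\tau$ from start $x_0$, the random play moves from MAX vertex $x$ to $\sigma(x)$, from MIN vertex $x$ to $\tau(x)$, from random vertex $x$ to an out-neighbour drawn by $p_x$ independently, and stays at a sink once reached; its value is $\mathrm{Val}(s)$ if it reaches sink $s$, else $0$, and $v^G_{\sigma,\tau}(x_0)$ is its expectation. A best response to $\sigma$ is a positional MIN strategy $\tau$ with $v_{\sigma,\tau}\le v_{\sigma,\tau'}$ pointwise for all MIN strategies $\tau'$ (one exists), and $v^G_\sigma:=v^G_{\sigma,\tau}$ for such $\tau$. A positional MAX strategy $\sigma$ is optimal in $G$ if $v^G_\sigma\ge v^G_{\sigma''}$ pointwise for every positional MAX strategy $\sigma''$. Transformed game: for a set $A$ of arcs of $G$, $G[A,\sigma]$ is obtained from a copy of $G$ by replacing each arc $e=(x,y)\in A$ by an arc $(x,s_e)$ to a new sink $s_e$ of value $v^G_\sigma(y)$ (for random $x$, $p_x(s_e)=p_x(y)$);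 $y$ is kept. Strategies of $G$ and $G[A,\sigma]$ are identified (a MAX vertex $x$ with $\sigma(x)=y$, $(x,y)\in A$, moves to $s_{(x,y)}$). *)

From HB Require Import structures.
From mathcomp Require Import all_boot all_order all_algebra.
From mathcomp Require Import all_classical all_reals all_analysis.
Set Implicit Arguments. Unset Strict Implicit. Unset Printing Implicit Defensive.
Import Order.TTheory GRing.Theory Num.Theory numFieldNormedType.Exports.
Local Open Scope ring_scope.

Inductive vkind := Max | Min | Rand | Sink.

(* A simple stochastic game (raw data; well-formedness is [ssg_wf]).
   [garc] is the arc relation, [prob x y] the probability p_x(y) at random
   vertices, [sinkval s] the value Val(s) of a sink s. *)
Record ssg (R : realType) := SSG {
  vert : finType;
  kind : vert -> vkind;
  garc : rel vert;
  prob : vert -> vert -> R;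
  sinkval : vert -> R }.

Section Game.
Variables (R : realType) (G : ssg R).
Local Notation V := (vert G).

Definition is_rat (r : R) := exists q : rat, r = ratr q.

Definition ssg_wf : Prop :=
  [/\ (exists s : V, kind s = Sink),
      (forall x : V, kind x <> Sink -> exists y, garc x y),
      (forall x : V, kind x = Sink -> forall y, garc x y <-> y = x),
      (forall x : V, kind x = Rand ->
          (forall y, garc x y -> 0 < prob x y) /\
          (forall y, ~~ garc x y -> prob x y = 0) /\
          \sum_(y : V) prob x y = 1) &
      (forall s : V, kind s = Sink -> 0 <= sinkval s <= 1)].

Definition ssg_rational : Prop :=
  (forall x y : V, is_rat (prob x y)) /\ (forall s : V, is_rat (sinkval s)).

(* positional strategies: a choice of out-neighbour at each MAX (resp. MIN)
   vertex; the values at other vertices are irrelevant. *)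
Definition strategy := {ffun V -> V}.

Definition valid_max (sigma : strategy) : bool :=
  [forall x, if kind x is Max then garc x (sigma x) else true].
Definition valid_min (tau : strategy) : bool :=
  [forall x, if kind x is Min then garc x (tau x) else true].

Definition trans (sigma tau : strategy) (x y : V) : R :=
  match kind x with
  | Max => (sigma x == y)%:R
  | Min => (tau x == y)%:R
  | Rand => prob x y
  | Sink => (x == y)%:R
  end.

Definition step (sigma tau : strategy) (f : V -> R) : V -> R :=
  fun x => \sum_(y : V) trans sigma tau x y * f y.

Definition payoff (y : V) : R := if kind y is Sink then sinkval y else 0.

(* expected value of Val(X_n) * [X_n is a sink] after n steps from x *)
Definition nstep_value (sigma tau : strategy) (n : nat) (x : V) : R :=
  iter n (step sigma tau) payoff x.

(* v_{sigma,tau}(x): as sinks are absorbing, P(reach s) = lim_n P(X_n = s),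
   so the expected play value is the limit of the n-step values. *)
Definition value (sigma tau : strategy) (x : V) : R :=
  limn (fun n => nstep_value sigma tau n x).

Definition best_response (sigma tau : strategy) : bool :=
  valid_min tau &&
  [forall tau' : strategy, valid_min tau' ==>
     [forall x, value sigma tau x <= value sigma tau' x]].

(* v_sigma := v_{sigma,tau} for a best response tau (one exists) *)
Definition vsig (sigma : strategy) (x : V) : R :=
  if [pick tau | best_response sigma tau] is Some tau then value sigma tau x
  else 0.

Definition optimal (sigma : strategy) : Prop :=
  forall sigma'' : strategy, valid_max sigma'' ->
    forall x, vsig sigma'' x <= vsig sigma x.

End Game.

Section Transform.
Variables (R : realType) (G : ssg R) (A : {set vert G * vert G})
          (sigma : strategy G).
Local Notation V := (vert G).

Definition tvert : finType := (V + {e : V * V | e \in A})%type.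

Definition tkind (x : tvert) : vkind :=
  match x with inl x => kind x | inr _ => Sink end.

Definition tarc (x y : tvert) : bool :=
  match x, y with
  | inl x, inl y => garc x y && ((x, y) \notin A)
  | inl x, inr e => (sval e).1 == x
  | inr e, inr e' => e == e'
  | inr _, inl _ => false
  end.

Definition tprob (x y : tvert) : R :=
  match x, y with
  | inl x, inl y => if (x, y) \in A then 0 else prob x y
  | inl x, inr e => if (sval e).1 == x then prob x (sval e).2 else 0
  | _, _ => 0
  end.

Definition tsval (x : tvert) : R :=
  match x with inl x => sinkval x | inr e => vsig sigma (sval e).2 end.

Definition transform : ssg R := @SSG R tvert tkind tarc tprob tsval.

Definition lift_strategy (s : strategy G) : strategy transform :=
  [ffun x : tvert =>
     match x with
     | inl x => if insub (x, s x) is Some e then inr e else inl (s x)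
     | inr e => inr e
     end].

End Transform.

(* The value v_s of a MAX strategy s is the least function above the sink
   payoffs that is excessive for s: non-increasing along s at MAX vertices,
   along some arc at MIN vertices, and in expectation at random vertices.
   Hence s is optimal iff it is max-stable, i.e. v_s(y) <= v_s(x) for every
   arc (x, y) out of a MAX vertex x.  Stability makes v_s excessive for every
   MAX strategy.  Conversely, let s' switch s at x to y and let t be a best
   response to s'; by optimality d := v_s(x) - v_{s',t}(x) >= 0, and then
   v_{s',t} + d is excessive for s wherever it lies below v_s, so that
   v_s(y) <= v_{s',t}(y) + d = v_{s',t}(x) + d = v_s(x).
   In G[A,s] the value of s is v_s on the old vertices and v_s(y) on the sink
   replacing an arc (x, y) of A, so arcs out of MAX vertices compare the same
   values in both games: max-stability, hence optimality, is the same. *)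

From HB Require Import structures.
From mathcomp Require Import all_boot all_order all_algebra.
From mathcomp Require Import all_classical all_reals all_analysis.
Set Implicit Arguments. Unset Strict Implicit. Unset Printing Implicit Defensive.
Import Order.TTheory GRing.Theory Num.Theory numFieldNormedType.Exports.
Local Open Scope ring_scope.
Local Open Scope classical_set_scope.

Section Play.
Variables (R : realType) (H : ssg R).
Local Notation V := (vert H).
Local Notation payoff := (@payoff R H).

(* The consequences of [ssg_wf] that are used; unlike [ssg_wf] they are
   straightforward to check for the transformed game. *)
Record sound : Prop := Sound {
  sinkval01 : forall s : V, kind s = Sink -> 0 <= sinkval s <= 1;
  prob_ge0 : forall x y : V, kind x = Rand -> 0 <= prob x y;
  prob_sum1 : forall x : V, kind x = Rand -> \sum_y prob x y = 1;
  min_arc : forall x : V, kind x = Min -> exists y, garc x y }.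

Hypothesis Hs : sound.

Lemma sum_delta (a : V) (f : V -> R) : \sum_y (a == y)%:R * f y = f a.
Proof.
rewrite (bigD1 a) //= eqxx mul1r big1 ?addr0 // => y ya.
by rewrite eq_sym (negbTE ya) mul0r.
Qed.

Lemma stepE (s t : strategy H) f x : step s t f x =
  match kind x with
  | Max => f (s x) | Min => f (t x)
  | Rand => \sum_y prob x y * f y | Sink => f x end.
Proof. by rewrite /step /trans; case: (kind x) => //; exact: sum_delta. Qed.

Lemma trans_ge0 (s t : strategy H) x y : 0 <= trans s t x y.
Proof. by rewrite /trans; case E: (kind x) => //; exact: prob_ge0. Qed.

Lemma step_ge0 (s t : strategy H) f x :
  (forall y, 0 <= f y) -> 0 <= step s t f x.
Proof. by move=> f0; apply: sumr_ge0 => y _; rewrite mulr_ge0 ?trans_ge0. Qed.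

Lemma step_le (s t : strategy H) f g x :
  (forall y, f y <= g y) -> step s t f x <= step s t g x.
Proof. by move=> fg; apply: ler_sum => y _; rewrite ler_wpM2l ?trans_ge0. Qed.

Lemma step1 (s t : strategy H) x : step s t (fun=> 1) x = 1.
Proof.
rewrite stepE; case E: (kind x) => //; rewrite -[RHS](prob_sum1 Hs E).
by apply: eq_bigr => y _; rewrite mulr1.
Qed.

Lemma payoff_ge0 (x : V) : 0 <= payoff x.
Proof. by rewrite /payoff; case E: (kind x) => //; case/andP: (sinkval01 Hs E). Qed.

Lemma payoff_le1 (x : V) : payoff x <= 1.
Proof. by rewrite /payoff; case E: (kind x) => //; case/andP: (sinkval01 Hs E). Qed.

Section Value.
Variables (s t : strategy H).
Local Notation step := (step s t).
Local Notation u := (nstep_value s t).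

Lemma payoff_le_step x : payoff x <= step payoff x.
Proof.
case E: (kind x); last by rewrite stepE E.
all: by rewrite {1}/payoff E; apply: step_ge0; exact: payoff_ge0.
Qed.

Lemma nstep_value_le_succ n x : u n x <= u n.+1 x.
Proof.
rewrite /nstep_value; elim: n x => [|n IH] x /=; first exact: payoff_le_step.
exact: step_le.
Qed.

Lemma nstep_value_le f : (forall x, payoff x <= f x) ->
  (forall x, step f x <= f x) -> forall n x, u n x <= f x.
Proof.
move=> pf ff; elim=> [|n IH] x //=.
exact: le_trans (step_le _ _ _ IH) (ff x).
Qed.

Lemma nondecreasing_nstep_value x : nondecreasing_seq (u ^~ x).
Proof. by apply/nondecreasing_seqP => n; exact: nstep_value_le_succ. Qed.

Lemma cvg_nstep_value x : cvgn (u ^~ x).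
Proof.
apply: nondecreasing_is_cvgn; first exact: nondecreasing_nstep_value.
exists 1 => _ [n _ <-]; apply: (nstep_value_le payoff_le1) => y.
by rewrite step1.
Qed.

Lemma nstep_value_le_value n x : u n x <= value s t x.
Proof.
by apply: nondecreasing_cvgn_le; [exact: nondecreasing_nstep_value|exact: cvg_nstep_value].
Qed.

Lemma value_le f : (forall x, payoff x <= f x) ->
  (forall x, step f x <= f x) -> forall x, value s t x <= f x.
Proof.
move=> pf ff x; apply: limr_le; first exact: cvg_nstep_value.
by apply: nearW => n; exact: nstep_value_le.
Qed.

Lemma payoff_le_value x : payoff x <= value s t x.
Proof. exact: (nstep_value_le_value 0). Qed.

Lemma value_ge0 x : 0 <= value s t x.
Proof. exact: le_trans (payoff_ge0 x) (payoff_le_value x). Qed.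

Lemma value_le1 x : value s t x <= 1.
Proof. by apply: (value_le payoff_le1) => y; rewrite step1. Qed.

Lemma step_value x : step (value s t) x = value s t x.
Proof.
have step_u : (fun n => step (u n) x) @ \oo --> step (value s t) x.
  apply: cvg_big => [|y _]; first exact: add_continuous.
  by apply: cvgMl_tmp; exact: cvg_nstep_value.
suff /cvg_lim <- : u ^~ x @ \oo --> step (value s t) x by [].
by rewrite -cvg_shiftS; exact: step_u.
Qed.

Lemma valueE x : value s t x =
  match kind x with
  | Max => value s t (s x) | Min => value s t (t x)
  | Rand => \sum_y prob x y * value s t y | Sink => value s t x end.
Proof. by rewrite -{1}step_value stepE. Qed.

Lemma value_sink x : kind x = Sink -> value s t x = sinkval x.
Proof.
move=> Ex; rewrite /value (_ : (fun n => u n x) = fun=> sinkval x) ?lim_cst //.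
apply: funext; elim=> [|n IH]; first by rewrite /nstep_value /= /payoff Ex.
by rewrite /nstep_value iterS stepE Ex.
Qed.

End Value.

Lemma valid_max_arc (s : strategy H) x : valid_max s -> kind x = Max -> garc x (s x).
Proof. by move=> /forallP/(_ x) + Ex; rewrite Ex. Qed.

Lemma valid_min_arc (t : strategy H) x : valid_min t -> kind x = Min -> garc x (t x).
Proof. by move=> /forallP/(_ x) + Ex; rewrite Ex. Qed.

Lemma valid_min_exists : exists t : strategy H, valid_min t.
Proof.
exists [ffun x => odflt x [pick y | garc x y]].
apply/forallP => x; case Ex: (kind x) => //; rewrite ffunE.
case: pickP => [y //|no_arc].
by have [y xy] := min_arc Hs Ex; have := no_arc y; rewrite xy.
Qed.

Definition merge_response (s t1 t2 : strategy H) : strategy H :=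
  [ffun x => if value s t2 x < value s t1 x then t2 x else t1 x].

Lemma valid_merge_response (s t1 t2 : strategy H) :
  valid_min t1 -> valid_min t2 -> valid_min (merge_response s t1 t2).
Proof.
move=> /forallP v1 /forallP v2; apply/forallP => x; move: (v1 x) (v2 x).
by rewrite ffunE; case: (kind x) => //; case: ifP.
Qed.

Lemma value_merge_response (s t1 t2 : strategy H) x :
  value s (merge_response s t1 t2) x <= (value s t1 \min value s t2) x.
Proof.
apply: value_le => {x} [x|x] /=; first by rewrite le_min !payoff_le_value.
rewrite stepE /=; case Ex: (kind x).
- by rewrite [value s t1 x]valueE [value s t2 x]valueE Ex.
- rewrite /merge_response ffunE; case: ltP => _.
  + by rewrite [value s t2 x]valueE Ex ge_min lexx orbT.
  + by rewrite [value s t1 x]valueE Ex ge_min lexx.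
- rewrite [value s t1 x]valueE [value s t2 x]valueE Ex le_min.
  by apply/andP; split; apply: ler_sum => y _;
    rewrite ler_wpM2l ?(prob_ge0 Hs) ?ge_min ?lexx ?orbT.
- exact: lexx.
Qed.

Lemma best_response_exists (s : strategy H) : exists t, best_response s t.
Proof.
(* A minimiser of the total value is a best response: otherwise merging it with
   a better response would decrease the total. *)
have [t0 vt0] := valid_min_exists.
pose total t := \sum_x value s t x.
have [t vt t_min] := @arg_minP _ _ _ t0 (@valid_min _ H) total vt0.
exists t; rewrite /best_response vt /=.
apply/forallP => t2; apply/implyP => vt2; apply/forallP => x.
rewrite leNgt; apply/negP => lt2.
have := t_min _ (valid_merge_response s vt vt2); rewrite leNgt => /negP; apply.
rewrite /total (bigD1 x) //= [X in _ < X](bigD1 x) //=; apply: ltr_leD.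
  by apply: le_lt_trans (value_merge_response s t t2 x) _; rewrite gt_min lt2 orbT.
apply: ler_sum => y _; apply: le_trans (value_merge_response s t t2 y) _.
by rewrite ge_min lexx.
Qed.

Lemma vsig_value (s : strategy H) : exists2 t, best_response s t & forall x, vsig s x = value s t x.
Proof.
have [t0 bt0] := best_response_exists s.
rewrite /vsig; case: pickP => [t bt | none]; first by exists t.
by have := none t0; rewrite bt0.
Qed.

Definition excessive_at (s : strategy H) (f : V -> R) (x : V) : Prop :=
  match kind x with
  | Max => f (s x) <= f x
  | Min => exists2 y, garc x y & f y <= f x
  | Rand => \sum_y prob x y * f y <= f x
  | Sink => True
  end.

Lemma excessive_at_le (s : strategy H) f g x : (forall y, f y <= g y) -> g x <= f x ->
  excessive_at s g x -> excessive_at s f x.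
Proof.
move=> fg gf; rewrite /excessive_at; case Ex: (kind x) => //.
- by move=> gs; apply: le_trans (fg _) (le_trans gs gf).
- by case=> y xy gy; exists y => //; apply: le_trans (fg _) (le_trans gy gf).
- move=> gp; apply: le_trans gf; apply: le_trans gp.
  by apply: ler_sum => y _; rewrite ler_wpM2l ?(prob_ge0 Hs).
Qed.

Section Vsig.
Variable s : strategy H.

Lemma payoff_le_vsig x : payoff x <= vsig s x.
Proof. by have [t _ ->] := vsig_value s; exact: payoff_le_value. Qed.

Lemma vsig_ge0 x : 0 <= vsig s x.
Proof. by have [t _ ->] := vsig_value s; exact: value_ge0. Qed.

Lemma vsig_le1 x : vsig s x <= 1.
Proof. by have [t _ ->] := vsig_value s; exact: value_le1. Qed.

Lemma vsig_sink x : kind x = Sink -> vsig s x = sinkval x.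
Proof. by have [t _ ->] := vsig_value s; exact: value_sink. Qed.

Lemma vsig_excessive x : excessive_at s (vsig s) x.
Proof.
have [t bt vt] := vsig_value s; rewrite /excessive_at !vt (valueE s t x).
case Ex: (kind x) => //.
- by exists (t x); [exact: valid_min_arc (proj1 (andP bt)) Ex|rewrite vt].
- by apply: ler_sum => y _; rewrite vt.
Qed.

Lemma vsig_le f : (forall x, payoff x <= f x) -> (forall x, excessive_at s f x) ->
  forall x, vsig s x <= f x.
Proof.
move=> pf ef x; have [t /andP[_ /forallP t_best] ->] := vsig_value s.
pose tf : strategy H := [ffun y => odflt y [pick z | garc y z && (f z <= f y)]].
have vtf : valid_min tf.
  apply/forallP => y; case Ey: (kind y) => //; rewrite ffunE.
  case: pickP => [z /andP[] //|none].
  by have := ef y; rewrite /excessive_at Ey => -[z yz fz]; have := none z; rewrite yz fz.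
apply: le_trans (_ : value s tf x <= f x).
  by move: (t_best tf); rewrite vtf => /forallP.
apply: value_le => // y; have := ef y; rewrite stepE /excessive_at.
case: (kind y) => // _; rewrite ffunE.
by case: pickP => [z /andP[] //|_]; exact: lexx.
Qed.

Lemma vsig_le_local f : (forall x, payoff x <= f x) ->
  (forall x, f x < vsig s x -> excessive_at s (vsig s \min f) x) ->
  forall x, vsig s x <= f x.
Proof.
move=> pf ef x; suff : vsig s x <= (vsig s \min f) x by rewrite le_min => /andP[].
apply: vsig_le => {x} [x|x]; first by rewrite le_min payoff_le_vsig pf.
case: (leP (vsig s x) (f x)) => [le_vf|]; last exact: ef.
apply: excessive_at_le (vsig_excessive x) => [y|]; first by rewrite ge_min lexx.
by rewrite le_min lexx le_vf.
Qed.

End Vsig.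

Definition max_stable (s : strategy H) : Prop :=
  forall x y, kind x = Max -> garc x y -> vsig s y <= vsig s x.

Lemma optimal_max_stable (s : strategy H) : max_stable s -> optimal s.
Proof.
move=> st s2 vs2; apply: vsig_le => [x|x]; first exact: payoff_le_vsig.
have := vsig_excessive s x; rewrite /excessive_at.
by case Ex: (kind x) => // _; exact: st Ex (valid_max_arc vs2 Ex).
Qed.

Lemma vsig_le_switched (s s' t : strategy H) x d :
  valid_min t -> (forall y, y != x -> s' y = s y) -> 0 <= d ->
  vsig s x <= value s' t x + d -> forall y, vsig s y <= value s' t y + d.
Proof.
move=> vt ss' d0 le_x; apply: (vsig_le_local (f := fun y => value s' t y + d)) => [y|y lt_y].
  by rewrite -[payoff y]addr0 lerD ?payoff_le_value.
have yx : y != x by apply: contraTneq lt_y => ->; rewrite -leNgt.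
set h := _ \min _; have hf z : h z <= value s' t z + d by rewrite ge_min lexx orbT.
rewrite /excessive_at.
have -> : h y = value s' t y + d by rewrite /h /= (min_r (ltW lt_y)).
rewrite (valueE s' t y); case Ey: (kind y) => //.
- by rewrite -(ss' y yx); exact: hf.
- by exists (t y); [exact: valid_min_arc|exact: hf].
- apply: le_trans (_ : \sum_z prob y z * (value s' t z + d) <= _).
    by apply: ler_sum => z _; rewrite ler_wpM2l ?(prob_ge0 Hs).
  under eq_bigr do rewrite mulrDr.
  by rewrite big_split /= -mulr_suml (prob_sum1 Hs Ey) mul1r.
Qed.

Lemma max_stable_optimal (s : strategy H) : valid_max s -> optimal s -> max_stable s.
Proof.
move=> vs opt x y Ex xy; pose s' : strategy H := [ffun z => if z == x then y else s z].
have vs' : valid_max s'.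
  apply/forallP => z; rewrite ffunE; case: eqP => [->|_]; first by rewrite Ex.
  exact: (forallP vs z).
have [t /andP[vt _] vt'] := vsig_value s'.
have s's z : z != x -> s' z = s z by rewrite ffunE => /negbTE ->.
have d0 : 0 <= vsig s x - value s' t x by rewrite subr_ge0 -vt'; exact: opt.
have le_x : vsig s x <= value s' t x + (vsig s x - value s' t x) by rewrite addrC subrK.
have := vsig_le_switched vt s's d0 le_x y.
by rewrite [value s' t x]valueE Ex ffunE eqxx addrC subrK.
Qed.

Lemma optimalP (s : strategy H) : valid_max s -> optimal s <-> max_stable s.
Proof. by move=> vs; split; [exact: max_stable_optimal|exact: optimal_max_stable]. Qed.

End Play.

Lemma ssg_wf_sound (R : realType) (H : ssg R) : ssg_wf H -> sound H.
Proof.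
case=> _ arc _ rand sinks; split => // [x y Ex|x Ex|x Ex].
- have [pos [zero _]] := rand x Ex.
  by case: (boolP (garc x y)) => [/pos/ltW //|/zero ->].
- by have [_ [_ ->]] := rand x Ex.
- by apply: arc; rewrite Ex.
Qed.

Section Transform.
Variables (R : realType) (G : ssg R) (A : {set vert G * vert G}) (sig : strategy G).
Hypothesis HG : sound G.
Hypothesis A_arc : forall x y, (x, y) \in A -> garc x y.
Local Notation V := (vert G).
Local Notation T := (transform A sig).
Local Notation rho := (lift_strategy A sig sig).

Lemma kind_inl x : kind (inl x : vert T) = kind x.
Proof. by []. Qed.

Definition lift_vert (x y : V) : vert T :=
  if insub (x, y) is Some e then inr e else inl y.

Lemma lift_strategyE (s : strategy G) x : lift_strategy A sig s (inl x) = lift_vert x (s x).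
Proof. by rewrite ffunE. Qed.

Lemma lift_vert_val (e : {e : V * V | e \in A}) : lift_vert (val e).1 (val e).2 = inr e.
Proof. by rewrite /lift_vert -surjective_pairing valK. Qed.

Lemma lift_vert_arc x y : garc x y -> garc (inl x : vert T) (lift_vert x y).
Proof.
move=> xy; rewrite /lift_vert; case: insubP => [e _ ve | /negbTE nA] /=.
  by rewrite -[sval e]/(val e) ve eqxx.
by rewrite xy nA.
Qed.

Lemma arc_inlP x (t : vert T) : garc (inl x : vert T) t ->
  exists2 y, garc x y & t = lift_vert x y.
Proof.
case: t => [y /andP[xy nA] | e /eqP ex]; first by exists y; rewrite // /lift_vert insubN.
exists (val e).2; last by rewrite -ex lift_vert_val.
by apply: A_arc; rewrite -ex -surjective_pairing (valP e).
Qed.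

Lemma sum_prob_lift x (f : vert T -> R) :
  \sum_(t : vert T) prob (inl x : vert T) t * f t = \sum_y prob x y * f (lift_vert x y).
Proof.
rewrite big_sumType /= [RHS](bigID (fun y => (x, y) \in A)) /= addrC.
congr (_ + _); last first.
  rewrite [RHS]big_mkcond; apply: eq_bigr => y _.
  by case: (boolP ((x, y) \in A)) => xyA; rewrite /= ?mul0r // /lift_vert insubN.
rewrite (reindex_omap (fun e : {e : V * V | e \in A} => (val e).2)
                      (fun y => insub (x, y))); last first.
  by move=> y xyA; rewrite insubT.
rewrite [RHS]big_mkcond; apply: eq_bigr => e _ /=; case: eqP => [ex | nex].
  have xe : (x, (val e).2) = val e by rewrite -ex -surjective_pairing.
  have le : lift_vert x (val e).2 = inr e by rewrite -ex lift_vert_val.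
  by rewrite xe (valP e) valK eqxx le.
rewrite mul0r; case: insubP => [e' _ ve'|]; last by rewrite andbF.
case: eqP => [[ee]|]; last by rewrite andbF.
by case: nex; rewrite -[sval e]/(val e) -ee ve'.
Qed.

Lemma sound_transform : sound T.
Proof.
split.
- case=> [x|e] /= Ex; first exact: (sinkval01 HG Ex).
  by rewrite vsig_ge0 ?vsig_le1.
- case=> [x|//] [y|e] /= Ex; first by case: ifP; rewrite ?(prob_ge0 HG).
  by case: ifP; rewrite ?(prob_ge0 HG).
- case=> [x|//] /= Ex.
  transitivity (\sum_(t : vert T) prob (inl x : vert T) t * 1).
    by apply: eq_bigr => t _; rewrite mulr1.
  rewrite sum_prob_lift -[RHS](prob_sum1 HG Ex).
  by apply: eq_bigr => y _; rewrite mulr1.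
- case=> [x|//] /= Ex; have [y xy] := min_arc HG Ex.
  by exists (lift_vert x y); exact: lift_vert_arc.
Qed.

Lemma valid_max_lift : valid_max sig -> valid_max rho.
Proof.
move=> vs; apply/forallP => -[x|//] /=; case Ex: (kind x) => //.
by rewrite lift_strategyE; apply: lift_vert_arc; exact: valid_max_arc vs Ex.
Qed.

Definition lifted_vsig (t : vert T) : R :=
  match t with inl x => vsig sig x | inr e => vsig sig (sval e).2 end.

Lemma lifted_vsig_lift x y : lifted_vsig (lift_vert x y) = vsig sig y.
Proof. by rewrite /lift_vert; case: insubP => [e _ ve|] //=; rewrite -[sval e]/(val e) ve. Qed.

Lemma vsig_lift_le t : vsig rho t <= lifted_vsig t.
Proof.
apply: (vsig_le sound_transform) => {t} [[x|e]|[x|//]] /=.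
- exact: (payoff_le_vsig HG).
- exact: lexx.
- rewrite /excessive_at kind_inl; have := vsig_excessive HG sig x; rewrite /excessive_at.
  case: (kind x) => //.
  + by rewrite lift_strategyE lifted_vsig_lift.
  + by case=> y xy le_y; exists (lift_vert x y); [exact: lift_vert_arc|rewrite lifted_vsig_lift].
  + by move=> le_x; rewrite sum_prob_lift; under eq_bigr do rewrite lifted_vsig_lift.
Qed.

Lemma vsig_le_lift x : vsig sig x <= vsig rho (inl x).
Proof.
pose f y := vsig rho (inl y); pose h := vsig sig \min f.
have h_lift y z : h z <= vsig rho (lift_vert y z).
  rewrite /lift_vert; case: insubP => [e _ ve|_] /=; last by rewrite ge_min lexx orbT.
  by rewrite (vsig_sink sound_transform) //= -[sval e]/(val e) ve ge_min lexx.
apply: (vsig_le_local HG (f := f)) => {x} [x|x lt_x].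
  exact: (payoff_le_vsig sound_transform rho (inl x)).
rewrite /excessive_at; have -> : (vsig sig \min f) x = f x by rewrite /= (min_r (ltW lt_x)).
have := vsig_excessive sound_transform rho (inl x).
rewrite /excessive_at kind_inl; case Ex: (kind x) => //.
- by rewrite lift_strategyE; exact: le_trans (h_lift _ _).
- by case=> t /arc_inlP[y xy ->] le_y; exists y => //; exact: le_trans (h_lift _ _) le_y.
- move=> le_x; apply: le_trans le_x; rewrite sum_prob_lift; apply: ler_sum => y _.
  by apply: ler_wpM2l; [exact: (prob_ge0 HG _ Ex)|exact: h_lift].
Qed.

Lemma vsig_lift t : vsig rho t = lifted_vsig t.
Proof.
apply/eqP; rewrite eq_le vsig_lift_le; case: t => [x|e] /=; first exact: vsig_le_lift.
by rewrite (vsig_sink sound_transform).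
Qed.

Lemma max_stable_lift : max_stable rho <-> max_stable sig.
Proof.
split=> st x.
  move=> y Ex xy; have := st (inl x) (lift_vert x y) Ex (lift_vert_arc xy).
  by rewrite !vsig_lift lifted_vsig_lift.
case: x => [x|//] t /= Ex /arc_inlP[y xy ->].
by rewrite !vsig_lift lifted_vsig_lift; exact: st.
Qed.

End Transform.

Theorem lemma14 (R : realType) (G : ssg R) (A : {set vert G * vert G})
  (sigma : strategy G) :
  ssg_wf G -> ssg_rational G ->
  (forall x y : vert G, (x, y) \in A -> garc x y /\ kind x <> Sink) ->
  valid_max sigma ->
  optimal sigma <-> optimal (lift_strategy A sigma sigma).
Proof.
move=> /ssg_wf_sound HG _ HA vs.
have A_arc x y : (x, y) \in A -> garc x y by move=> /HA[].
apply: (iff_trans (optimalP HG vs)).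
apply: (iff_trans (iff_sym (max_stable_lift sigma HG A_arc))).
exact: (iff_sym (optimalP (sound_transform A sigma HG) (valid_max_lift A vs))).
Qed.
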